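(* For the Data Collection process on a fixed connected weighted graph with fixed sink, sources and relative rate vector $\bm{J}$, started from the all-empty state, for every $t\ge0$ and every node $u\in V\setminus\{u_s\}$, the probability $\Pr[Q^\beta_t(u)>0]$ is a non-decreasing function of $\beta$ (over $\beta>0$ with $\beta\bm{J}_v\le1$ for all $v$).
   Context: Data Collection process: on a connected undirected graph $G=(V,E,w)$ with positive weights and $d_u=\sum_{v:(u,v)\in E}w_{uv}$, fix a sink $u_s\in V$ and a set of sources $V_s\subseteq V\setminus\{u_s\}$, with relative rate vector $\bm{J}$ ($\bm{J}_v>0$ for $v\in V_s$, $0$ for other $v\ne u_s$, $\bm{J}_{u_s}=-\sum_{v\ne u_s}\bm{J}_v$) and $\beta>0$ with $\beta\bm{J}_v\le1$. The process with parameter $\beta$ is the discrete-time Markov chain $\{Q^\beta_t\}$ on $(\mathbb{N}\cup\{0\})^{V\setminus\{u_s\}}$ ($Q^\beta_t(v)$ = queue size at $v$) where at each step each $v\in V_s$ independently generates a new packet with probability $\beta\bm{J}_v$ into its queue, and each $u\ne u_s$ with nonempty queue picks one packet and a neighbor $v$ with probability $w_{uv}/d_u$ and transmits the packet to $v$ (added to $v$'s queue if $v\ne u_s$, removed from the system if $v=u_s$). *)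

(* Data Collection process: exact distribution after t steps,
   as a finite list of (probability, state) pairs. *)
From HB Require Import structures.
From mathcomp Require Import all_boot all_order all_algebra.
Set Implicit Arguments. Unset Strict Implicit. Unset Printing Implicit Defensive.
Import Order.TTheory GRing.Theory Num.Theory.
Local Open Scope ring_scope.

Section DataCollection.
Variables (R : realFieldType) (T : finType).
Variable w : T -> T -> R.      (* edge weights; w u v = 0 iff no edge *)
Variable us : T.
Variable Vs : {set T}.
Variable J : T -> R.
Variable beta : R.

Definition dc_deg (u : T) : R := \sum_(v : T) w u v.

(* a state: queue sizes; the sink entry is kept at 0 *)
Definition dc_state := {ffun T -> nat}.

Definition dc_active (q : dc_state) (u : T) : bool := (u != us) && (0 < q u)%N.

(* one step's random choices: generation bits and chosen neighbours *)
Definition dc_choice := ({ffun T -> bool} * {ffun T -> T})%type.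

Definition dc_gen_prob (v : T) (b : bool) : R :=
  if v \in Vs then (if b then beta * J v else 1 - beta * J v)
  else (if b then 0 else 1).

Definition dc_tgt_prob (q : dc_state) (u x : T) : R :=
  if dc_active q u then w u x / dc_deg u else (if x == u then 1 else 0).

Definition dc_step_prob (q : dc_state) (c : dc_choice) : R :=
  (\prod_(v : T) dc_gen_prob v (c.1 v)) * \prod_(u : T) dc_tgt_prob q u (c.2 u).

Definition dc_next (q : dc_state) (c : dc_choice) : dc_state :=
  [ffun x => if x == us then 0%N else
     (q x + c.1 x - dc_active q x + #|[set u | dc_active q u && (c.2 u == x)]|)%N].

Fixpoint dc_dist (t : nat) : seq (R * dc_state) :=
  match t with
  | 0 => [:: (1, [ffun => 0%N])]
  | t'.+1 => flatten [seq [seq (x.1 * dc_step_prob x.2 c, dc_next x.2 c)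
                           | c <- enum {: dc_choice}] | x <- dc_dist t']
  end.

Definition dc_prob_nonempty (t : nat) (u : T) : R :=
  \sum_(x <- dc_dist t | (0 < x.2 u)%N) x.1.

End DataCollection.

(* Write E^beta_t[f] for the expectation of f(Q^beta_t).  We show, by induction
   on t, that E^beta1_t[f] <= E^beta2_t[f] for every f that is non-decreasing
   for the coordinatewise order on states, whenever beta1 <= beta2; the
   theorem is the case f = indicator of (Q(u) > 0).  The induction step rests
   on two properties of the one-step operator P^beta f (q) = E[f(Q_{t+1}) | Q_t = q]:
   - P^beta maps non-decreasing functions to non-decreasing functions, and
   - P^beta1 f <= P^beta2 f pointwise for non-decreasing f.
   Both follow once the random choices of one step are written as a product
   measure that does not depend on q: an idle node's choice of neighbour is
   irrelevant, so it may be drawn from the same kernel w(u,.)/d_u as a busy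
   node's.  The next state is then monotone in q and in the generation bits,
   and raising beta raises each generation probability. *)
From HB Require Import structures.
From mathcomp Require Import all_boot all_order all_algebra.
From mathcomp Require Import lra zify.
Set Implicit Arguments. Unset Strict Implicit. Unset Printing Implicit Defensive.
Import Order.TTheory GRing.Theory Num.Theory.
Local Open Scope ring_scope.

Section ProductWeights.
Variables (R : realFieldType) (I X : finType).
Implicit Types (h : {ffun I -> X}) (a b : I -> X -> R) (p : X -> R)
  (F G : {ffun I -> X} -> R).

Definition upd h (i0 : I) (x : X) : {ffun I -> X} :=
  [ffun i => if i == i0 then x else h i].

Lemma upd_at h i0 x : upd h i0 x i0 = x.
Proof. by rewrite ffunE eqxx. Qed.

Lemma upd_upd h i0 x y : upd (upd h i0 x) i0 y = upd h i0 y.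
Proof. by apply/ffunP => i; rewrite !ffunE; case: eqP. Qed.

Lemma upd_id h i0 : upd h i0 (h i0) = h.
Proof. by apply/ffunP => i; rewrite ffunE; case: eqP => // ->. Qed.

Lemma upd_eqE h i0 x : (upd h i0 x == h) = (h i0 == x).
Proof.
apply/eqP/eqP => [<-|<-]; [exact: upd_at | exact: upd_id].
Qed.

(* A sum over functions, split by the value x of coordinate i0: each slice is
   a copy of the slice {h | h i0 = y0}. *)
Lemma sum_ffun_coord (S : {ffun I -> X} -> R) i0 (y0 : X) :
  \sum_(h : {ffun I -> X}) S h =
  \sum_(x : X) \sum_(h : {ffun I -> X} | h i0 == y0) S (upd h i0 x).
Proof.
rewrite (partition_big (fun h : {ffun I -> X} => h i0) predT) //=.
apply: eq_bigr => x _.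
rewrite (reindex_onto (fun h => upd h i0 x) (fun h => upd h i0 y0)) /=.
  by apply: eq_bigl => h; rewrite upd_at eqxx upd_upd upd_eqE.
by move=> h /eqP hx; rewrite upd_upd -hx upd_id.
Qed.

Definition pmean a F : R := \sum_(h : {ffun I -> X}) (\prod_i a i (h i)) * F h.

Definition setw a (i0 : I) p : I -> X -> R :=
  fun i => if i == i0 then p else a i.

Lemma eq_pmean a a' F : (forall i x, a i x = a' i x) -> pmean a F = pmean a' F.
Proof.
by move=> eqa; apply: eq_bigr => h _; congr (_ * _); apply: eq_bigr.
Qed.

Lemma pmean_le a F G : (forall i x, 0 <= a i x) -> (forall h, F h <= G h) ->
  pmean a F <= pmean a G.
Proof.
move=> a0 FG; apply: ler_sum => h _; apply: ler_wpM2l => //.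
exact: prodr_ge0.
Qed.

(* the part of pmean (setw b i0 p) F coming from coordinate i0 taking the
   value x, with the weight p x factored out *)
Definition slice b i0 (y0 : X) F (x : X) : R :=
  \sum_(h : {ffun I -> X} | h i0 == y0)
    (\prod_(i | i != i0) b i (h i)) * F (upd h i0 x).

Lemma pmean_setw b i0 p F y0 :
  pmean (setw b i0 p) F = \sum_(x : X) p x * slice b i0 y0 F x.
Proof.
rewrite /pmean (sum_ffun_coord _ i0 y0); apply: eq_bigr => x _.
rewrite /slice mulr_sumr; apply: eq_bigr => h _.
rewrite (bigD1 i0) //= /setw eqxx upd_at mulrA; congr (_ * _ * _).
by apply: eq_bigr => i /negPf ni; rewrite ni ffunE ni.
Qed.

Lemma pmean_setw_indep b i0 p p' F :
  (forall h x, F (upd h i0 x) = F h) -> \sum_x p x = \sum_x p' x ->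
  pmean (setw b i0 p) F = pmean (setw b i0 p') F.
Proof.
move=> Find psum.
have [h0 _|noh] := pickP (@predT {ffun I -> X}); last first.
  by rewrite /pmean !big1 // => h; have := noh h.
have sliceE x : slice b i0 (h0 i0) F x = slice b i0 (h0 i0) F (h0 i0).
  by apply: eq_bigr => h _; rewrite !Find.
rewrite !(pmean_setw _ _ _ _ (h0 i0)).
under eq_bigr do rewrite sliceE.
by under [RHS]eq_bigr do rewrite sliceE; rewrite -!mulr_suml psum.
Qed.

Lemma pmean_hybrid (a a' : I -> X -> R) (F : {ffun I -> X} -> R) :
  (forall i x, 0 <= a i x) -> (forall i x, 0 <= a' i x) ->
  (forall i (b : I -> X -> R), (forall j x, 0 <= b j x) ->
     pmean (setw b i (a i)) F <= pmean (setw b i (a' i)) F) ->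
  pmean a F <= pmean a' F.
Proof.
move=> a0 a'0 step.
pose mix (s : seq I) i := if i \in s then a' i else a i.
have mix0 s j x : 0 <= mix s j x by rewrite /mix; case: ifP.
suff mixP : forall s, pmean a F <= pmean (mix s) F.
  have := mixP (enum I); rewrite (@eq_pmean (mix _) a') // => i x.
  by rewrite /mix mem_enum.
elim=> [|i0 s IH]; first by rewrite (@eq_pmean (mix [::]) a).
apply: le_trans IH _.
rewrite (@eq_pmean (mix (i0 :: s)) (setw (mix s) i0 (a' i0))); last first.
  by move=> i x; rewrite /mix /setw in_cons; case: eqP => // ->.
rewrite {1}(@eq_pmean (mix s) (setw (mix s) i0 (mix s i0))); last first.
  by move=> i x; rewrite /setw; case: eqP => // ->.
have [i0s|i0s] := boolP (i0 \in s).
  by have -> : mix s i0 = a' i0 by rewrite /mix i0s.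
have -> : mix s i0 = a i0 by rewrite /mix (negPf i0s).
exact: step.
Qed.

End ProductWeights.

Section BooleanDominance.
Variables (R : realFieldType) (I : finType).

Lemma pmean_setw_dominate (b : I -> bool -> R) i0 (p p' : bool -> R)
    (F : {ffun I -> bool} -> R) :
  (forall i x, 0 <= b i x) -> (forall h, F (upd h i0 false) <= F (upd h i0 true)) ->
  p true <= p' true -> p true + p false = p' true + p' false ->
  pmean (setw b i0 p) F <= pmean (setw b i0 p') F.
Proof.
move=> b0 Fmono le_true psum; rewrite !(pmean_setw _ _ _ _ false) !big_bool /=.
have : slice b i0 false F false <= slice b i0 false F true.
  apply: ler_sum => h _; apply: ler_wpM2l => //; exact: prodr_ge0.
nra.
Qed.

End BooleanDominance.

Definition dist_mean (R : realFieldType) (S : Type) (d : seq (R * S))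
    (f : S -> R) : R :=
  \sum_(x <- d) x.1 * f x.2.

Lemma dist_mean_le (R : realFieldType) (S : eqType) (d : seq (R * S))
    (f g : S -> R) :
  (forall x, x \in d -> 0 <= x.1) -> (forall s, f s <= g s) ->
  dist_mean d f <= dist_mean d g.
Proof.
move=> d0 fg; rewrite /dist_mean big_seq [leRHS]big_seq.
by apply: ler_sum => x xd; apply: ler_wpM2l; [exact: d0 | exact: fg].
Qed.

Definition monotone_state (R : realFieldType) (T : finType)
    (f : dc_state T -> R) :=
  forall q q' : dc_state T, (forall x, q x <= q' x)%N -> f q <= f q'.

Section OneStep.
Variables (R : realFieldType) (T : finType) (w : T -> T -> R) (us : T).
Variables (Vs : {set T}) (J : T -> R).
Hypothesis w_ge0 : forall u v, 0 <= w u v.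
Hypothesis deg_gt0 : forall u, u != us -> 0 < dc_deg w u.
Implicit Types (q : dc_state T) (f : dc_state T -> R) (beta : R) (u v x : T).

Definition admissible (beta : R) := forall v, v \in Vs -> 0 <= beta * J v <= 1.

Lemma gen_prob_ge0 beta v (bit : bool) :
  admissible beta -> 0 <= dc_gen_prob Vs J beta v bit.
Proof.
move=> adm; rewrite /dc_gen_prob; case: ifP => [/adm|_]; last by case: bit.
by case: bit => /andP [? ?]; lra.
Qed.

(* the neighbour-choice kernel of u as if u were busy (the sink stays put) *)
Definition relay (u x : T) : R :=
  if u == us then (if x == u then 1 else 0) else w u x / dc_deg w u.

Lemma relay_ge0 u x : 0 <= relay u x.
Proof.
rewrite /relay; case: ifP => _; first by case: ifP.
by apply: divr_ge0 => //; apply: sumr_ge0.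
Qed.

Lemma tgt_prob_ge0 q u x : 0 <= dc_tgt_prob w us q u x.
Proof.
rewrite /dc_tgt_prob; case: ifP => _; last by case: ifP.
by apply: divr_ge0 => //; apply: sumr_ge0.
Qed.

Lemma tgt_prob_relay q u x : dc_active us q u || (u == us) ->
  dc_tgt_prob w us q u x = relay u x.
Proof.
rewrite /dc_tgt_prob /relay /dc_active.
by have [->|nu] := eqVneq u us; rewrite /= ?orbF // => ->.
Qed.

Lemma next_idle q (b : {ffun T -> bool}) (h : {ffun T -> T}) u y :
  ~~ dc_active us q u ->
  dc_next us q (b, upd h u y) = dc_next us q (b, h).
Proof.
move=> idle; apply/ffunP => x; rewrite !ffunE /=; case: eqP => // _.
congr (_ + _)%N; apply: eq_card => v; rewrite !inE ffunE.
by have [->|] := eqVneq v u; rewrite ?(negPf idle).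
Qed.

Lemma next_mono q q' (b b' : {ffun T -> bool}) (h : {ffun T -> T}) :
  (forall x, q x <= q' x)%N -> (forall x, b x <= b' x)%N ->
  forall x, (dc_next us q (b, h) x <= dc_next us q' (b', h) x)%N.
Proof.
move=> qq bb x; rewrite !ffunE; case: eqP => // /eqP nx /=.
apply: leq_add.
  rewrite /dc_active nx /=; move: (qq x) (bb x).
  by case: (ltnP 0 (q x)); case: (ltnP 0 (q' x)) => /=; lia.
apply: subset_leq_card; apply/subsetP => v; rewrite !inE => /andP [act ->].
rewrite andbT; move: act; rewrite /dc_active => /andP [-> pos] /=.
exact: leq_trans pos (qq v).
Qed.

Lemma pmean_tgt_relay q (F : {ffun T -> T} -> R) :
  (forall u, ~~ dc_active us q u -> forall h y, F (upd h u y) = F h) ->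
  pmean (dc_tgt_prob w us q) F = pmean relay F.
Proof.
move=> Fidle.
have coord u (b : T -> T -> R) :
    pmean (setw b u (dc_tgt_prob w us q u)) F = pmean (setw b u (relay u)) F.
  have [busy|] := boolP (dc_active us q u || (u == us)).
    apply: eq_pmean => i x; rewrite /setw.
    by case: eqP => // _; exact: tgt_prob_relay.
  rewrite negb_or => /andP [idle nu]; apply: pmean_setw_indep; first exact: Fidle.
  rewrite /dc_tgt_prob /relay (negPf idle) (negPf nu) -mulr_suml.
  rewrite -/(dc_deg w u) divff ?lt0r_neq0 ?deg_gt0 //.
  by rewrite -big_mkcond /= big_pred1_eq.
apply/eqP; rewrite eq_le; apply/andP; split; apply: pmean_hybrid;
  by move=> *; rewrite ?coord ?tgt_prob_ge0 ?relay_ge0.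
Qed.

Definition step_mean beta (f : dc_state T -> R) (q : dc_state T) : R :=
  \sum_(c : dc_choice T) dc_step_prob w us Vs J beta q c * f (dc_next us q c).

Lemma dist_mean_succ beta t f :
  dist_mean (dc_dist w us Vs J beta t.+1) f =
  dist_mean (dc_dist w us Vs J beta t) (step_mean beta f).
Proof.
rewrite /dist_mean /= big_flatten /= big_map; apply: eq_bigr => x _.
rewrite big_map big_enum /= /step_mean mulr_sumr; apply: eq_bigr => c _.
by rewrite mulrA.
Qed.

Lemma step_mean_decomp beta f q :
  step_mean beta f q = pmean (dc_gen_prob Vs J beta)
    (fun b => pmean relay (fun h => f (dc_next us q (b, h)))).
Proof.
rewrite /step_mean -(pair_bigA _ (fun b h =>
  dc_step_prob w us Vs J beta q (b, h) * f (dc_next us q (b, h)))).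
apply: eq_bigr => b _; rewrite -(@pmean_tgt_relay q); last first.
  by move=> u idle h y; rewrite next_idle.
rewrite /pmean mulr_sumr; apply: eq_bigr => h _.
by rewrite /dc_step_prob mulrA.
Qed.

Lemma relay_mean_mono f q q' (b b' : {ffun T -> bool}) : monotone_state f ->
  (forall x, q x <= q' x)%N -> (forall x, b x <= b' x)%N ->
  pmean relay (fun h => f (dc_next us q (b, h))) <=
  pmean relay (fun h => f (dc_next us q' (b', h))).
Proof.
move=> fmono qq bb; apply: pmean_le => [*|h]; first exact: relay_ge0.
by apply: fmono; apply: next_mono.
Qed.

Lemma step_mean_mono beta f : admissible beta -> monotone_state f ->
  monotone_state (step_mean beta f).
Proof.
move=> adm fmono q q' qq; rewrite !step_mean_decomp.
apply: pmean_le => [*|b]; first exact: gen_prob_ge0.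
exact: relay_mean_mono.
Qed.

Lemma step_mean_rate beta1 beta2 f q :
  admissible beta1 -> admissible beta2 ->
  (forall v, v \in Vs -> beta1 * J v <= beta2 * J v) -> monotone_state f ->
  step_mean beta1 f q <= step_mean beta2 f q.
Proof.
move=> adm1 adm2 le12 fmono; rewrite !step_mean_decomp.
apply: pmean_hybrid => [*|*|v b b0]; rewrite ?gen_prob_ge0 //.
apply: pmean_setw_dominate => //.
- move=> h; apply: relay_mean_mono => // x.
  by rewrite !ffunE; case: eqP.
- by rewrite /dc_gen_prob; case: ifP => // /le12.
- by rewrite /dc_gen_prob; case: ifP => _; lra.
Qed.

Lemma dist_weight_ge0 beta t (x : R * dc_state T) : admissible beta ->
  x \in dc_dist w us Vs J beta t -> 0 <= x.1.
Proof.
move=> adm; elim: t x => [|t IH] x /=; first by rewrite mem_seq1 => /eqP ->.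
move=> /flattenP [s /mapP [y yd ->]] /mapP [c _ ->] /=.
apply: mulr_ge0; first exact: IH.
by apply: mulr_ge0; apply: prodr_ge0 => v _; rewrite ?gen_prob_ge0 ?tgt_prob_ge0.
Qed.

Lemma dist_mean_rate beta1 beta2 t f :
  admissible beta1 -> admissible beta2 ->
  (forall v, v \in Vs -> beta1 * J v <= beta2 * J v) -> monotone_state f ->
  dist_mean (dc_dist w us Vs J beta1 t) f <= dist_mean (dc_dist w us Vs J beta2 t) f.
Proof.
move=> adm1 adm2 le12; elim: t f => [|t IH] f fmono; first exact: lexx.
rewrite !dist_mean_succ.
apply: le_trans (IH _ (step_mean_mono adm2 fmono)).
apply: dist_mean_le => [x|q]; first exact: dist_weight_ge0.
exact: step_mean_rate.
Qed.

End OneStep.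

Lemma deg_gt0_connected (R : realFieldType) (T : finType) (w : T -> T -> R)
    (us u : T) :
  (forall u v, 0 <= w u v) ->
  (forall u v, connect [rel x y | 0 < w x y] u v) -> u != us -> 0 < dc_deg w u.
Proof.
move=> w0 conn nu; have /connectP [[|y p] /=] := conn u us.
  by move=> _ eu; rewrite eu eqxx in nu.
move=> /andP [wy _] _; rewrite /dc_deg (bigD1 y) //=.
by apply: ltr_pwDl => //; apply: sumr_ge0.
Qed.

Theorem claim3 (R : realFieldType) (T : finType) (w : T -> T -> R)
    (us : T) (Vs : {set T}) (J : T -> R) :
  (forall u v, w u v = w v u) ->
  (forall u v, 0 <= w u v) ->
  (forall u v, connect [rel x y | 0 < w x y] u v) ->
  us \notin Vs ->
  (forall v, v \in Vs -> 0 < J v) ->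
  (forall v, v \notin Vs -> v != us -> J v = 0) ->
  J us = - \sum_(v | v != us) J v ->
  forall (t : nat) (u : T), u != us ->
  forall beta1 beta2 : R,
    0 < beta1 -> beta1 <= beta2 ->
    (forall v, beta1 * J v <= 1) -> (forall v, beta2 * J v <= 1) ->
    dc_prob_nonempty w us Vs J beta1 t u <= dc_prob_nonempty w us Vs J beta2 t u.
Proof.
move=> _ w0 conn _ J_gt0 _ _ t u _ beta1 beta2 beta1_gt0 le12 le1 le2.
have adm beta : 0 < beta -> (forall v, beta * J v <= 1) -> admissible Vs J beta.
  by move=> bpos ble v vV; rewrite ble andbT mulr_ge0 // ltW ?J_gt0.
have beta2_gt0 : 0 < beta2 by exact: lt_le_trans le12.
pose nonempty (q : dc_state T) : R := if (0 < q u)%N then 1 else 0.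
have probE beta : dc_prob_nonempty w us Vs J beta t u =
    dist_mean (dc_dist w us Vs J beta t) nonempty.
  rewrite /dc_prob_nonempty /dist_mean big_mkcond; apply: eq_bigr => x _.
  by rewrite /nonempty; case: ifP; rewrite ?mulr1 ?mulr0.
have deg_gt0 v : v != us -> 0 < dc_deg w v by exact: deg_gt0_connected.
rewrite !probE.
apply: (dist_mean_rate w0 deg_gt0 t (adm _ beta1_gt0 le1) (adm _ beta2_gt0 le2)).
- by move=> v vV; rewrite ler_pM2r ?J_gt0.
- move=> q q' qq; rewrite /nonempty; case: ifP => [pos|_]; last by case: ifP.
  by rewrite (leq_trans pos (qq u)).
Qed.
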